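(* Let $(T,A,m|_A)$ be a nonsingular open dynamical system with $m(A_\infty)=0$, fix $\alpha\in(0,1)$ and a finite measurable partition $\{B_1,\dots,B_n\}$ of $A$, and let $\hat A$, $\hat C$, $\hat{\mathbf c}$ and $(\hat D_{n,\alpha})$ be as in the context. If $x_1,\dots,x_n$ are positive numbers satisfying $$x_i^{1+\alpha}=\alpha\,\frac{\sum_j\hat C_{ij}x_j+\hat c_i}{\sum_k\hat C_{ki}x_k^{-\alpha}}\qquad(1\le i\le n),$$ and $\lambda_0^*\in\mathbb R$ satisfies $e^{\alpha\lambda_0^*-1}\sum_{i,j}\hat C_{ij}x_jx_i^{-\alpha}=\alpha$, then $\lambda^*=(\lambda_0^*,\lambda_1^*,\dots,\lambda_n^* )$ with $\lambda_i^*:=\log(x_i)-\lambda_0^*$ ($1\le i\le n$) solves $(\hat D_{n,\alpha})$.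
   Context: Let $(X,m)$ be a measure space, $A\subsetneq X$ measurable and $T:A\to X$ measurable such that: $H_0:=T(A)\setminus A$ is measurable; $m(A\cap T^{-1}H_0)>0$; $m(E)>0$ whenever $E\subseteq X$ is measurable with $m(T^{-1}E)>0$; and $T$ is locally finite-to-one (a nonsingular open dynamical system). Preimages are taken in $A$. $A_n=\{x:x,T(x),\dots,T^n(x)\in A\}$, $A_\infty=\bigcap_nA_n$, $H_1=A\setminus A_1$. $\mathbf 1_{A_1}\psi\circ T$ is $\psi\circ T$ on $A_1$ and $0$ elsewhere in $A$. With $\psi_j=\mathbf 1_{B_j}$ define $\mathcal M^*\lambda=\lambda_0\mathbf 1_{A_1}+\sum_{j=1}^n\lambda_j(\mathbf 1_{A_1}\psi_j\circ T-\alpha\psi_j)$ for $\lambda\in\mathbb R^{n+1}$; the reduced domain $\hat A$ is $A$ with the support of every $\mathcal M^*\lambda$ having $\lambda_0=0$ and $\mathcal M^*\lambda\le0$ $m$-a.e. removed (it is a union of partition sets $B_k$). Let $\hat m=m|_{\hat A}$, $\hat C_{kj}=\hat m(B_k\cap T^{-1}B_j)$ and $\hat c_k=\hat m(H_1\cap B_k)$. The problem $(\hat D_{n,\alpha})$ is: maximize over $\lambda\in\mathbb R^{n+1}$ $$\hat Q(\lambda)=\alpha\lambda_0-\int_{\hat A}\exp(\mathcal M^*\lambda-1)\,dm=\alpha\lambda_0-\sum_{j,k}\exp(\lambda_0-1+\lambda_j-\alpha\lambda_k)\hat C_{kj}-\sum_k\exp(-1-\alpha\lambda_k)\hat c_k.$$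 *)

From HB Require Import structures.
From mathcomp Require Import all_boot all_order all_algebra.
From mathcomp Require Import all_classical all_reals all_analysis.
Set Implicit Arguments. Unset Strict Implicit. Unset Printing Implicit Defensive.
Import Order.TTheory GRing.Theory Num.Theory.
Local Open Scope classical_set_scope.
Local Open Scope ring_scope.

Section OpenSystem.
Context {d : measure_display} {X : measurableType d} {R : realType}.

Definition locally_finite_to_one (A : set X) (T : X -> X) : Prop :=
  forall y : X, finite_set (A `&` T @^-1` [set y]).

Definition nonsingular_open_system (m : {measure set X -> \bar R})
  (A : set X) (T : X -> X) : Prop :=
  measurable A /\ A <> setT /\ measurable_fun A T /\
  measurable (T @` A `\` A) /\
  (0 < m (A `&` T @^-1` (T @` A `\` A)))%E /\
  (forall E : set X, measurable E -> (0 < m (A `&` T @^-1` E))%E ->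
     (0 < m E)%E) /\
  locally_finite_to_one A T.

Definition A_n (A : set X) (T : X -> X) (k : nat) : set X :=
  [set x | forall i : nat, (i <= k)%N -> A (iter i T x)].

Definition A_infty (A : set X) (T : X -> X) : set X :=
  \bigcap_k A_n A T k.

Definition H_1 (A : set X) (T : X -> X) : set X := A `\` A_n A T 1.

(* M^* lambda, evaluated at points of A, with psi_j = 1_{B_j} *)
Definition Mstar (A : set X) (T : X -> X) (n : nat) (B : 'I_n -> set X)
  (alpha : R) (l0 : R) (l : 'I_n -> R) (x : X) : R :=
  l0 * (\1_(A_n A T 1) x : R) +
  \sum_(j < n) l j * ((\1_(A_n A T 1) x : R) * (\1_(B j) (T x) : R)
                      - alpha * (\1_(B j) x : R)).

Definition ae_nonpos_on (m : {measure set X -> \bar R}) (A : set X)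
  (f : X -> R) : Prop :=
  exists N : set X, [/\ measurable N, m N = 0%E &
    forall x, A x -> ~ N x -> f x <= 0].

Definition Ahat (m : {measure set X -> \bar R}) (A : set X) (T : X -> X)
  (n : nat) (B : 'I_n -> set X) (alpha : R) : set X :=
  A `\` [set x | exists l : 'I_n -> R,
           ae_nonpos_on m A (Mstar A T B alpha 0 l) /\
           A x /\ Mstar A T B alpha 0 l x != 0].

End OpenSystem.

(* the objective of (hat D_{n,alpha}), in terms of hat C and hat c *)
Definition Qhat {R : realType} (n : nat) (alpha : R)
  (C : 'I_n -> 'I_n -> R) (c : 'I_n -> R) (l0 : R) (l : 'I_n -> R) : R :=
  alpha * l0
  - \sum_(j < n) \sum_(k < n) expR (l0 - 1 + l j - alpha * l k) * C k j
  - \sum_(k < n) expR (- 1 - alpha * l k) * c k.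

From HB Require Import structures.
From mathcomp Require Import all_boot all_order all_algebra.
From mathcomp Require Import all_classical all_reals all_analysis.
From mathcomp Require Import ring lra.
Import Order.TTheory GRing.Theory Num.Theory.
Set Implicit Arguments. Unset Strict Implicit. Unset Printing Implicit Defensive.
Local Open Scope classical_set_scope.
Local Open Scope ring_scope.

(* Qhat is an affine function of (l0, l) minus nonnegative combinations of
   exponentials of affine functions, hence concave; since every exponential lies
   above its tangent, Qhat is maximised at any of its critical points.  At
   lam* = (lam0, ln x - lam0) the exponential weights become
   exp(alpha lam0 - 1) x_j x_k^(-alpha) C_kj, so the normalisation of lam0 is the
   vanishing of the l0-derivative and the fixed-point equation for x_i is the
   vanishing of the l_i-derivative. *)

Lemma expR_tangent_le (R : realType) (y y0 K : R) :
  0 <= K -> expR y0 * (1 + (y - y0)) * K <= expR y * K.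
Proof.
move=> K_ge0; rewrite ler_wpM2r //.
have -> : expR y = expR y0 * expR (y - y0) by rewrite -expRD; congr expR; lra.
by rewrite ler_wpM2l ?expR_ge1Dx // ltW // expR_gt0.
Qed.

Section QhatConcave.
Variables (R : realType) (n : nat) (alpha : R).
Variables (C : 'I_n -> 'I_n -> R) (c : 'I_n -> R).

Definition Qhat_flux (l0 : R) (l : 'I_n -> R) (k j : 'I_n) : R :=
  expR (l0 - 1 + l j - alpha * l k) * C k j.

Definition Qhat_exit (l : 'I_n -> R) (k : 'I_n) : R :=
  expR (- 1 - alpha * l k) * c k.

Lemma QhatE l0 l : Qhat alpha C c l0 l = alpha * l0
  - \sum_(j < n) \sum_(k < n) Qhat_flux l0 l k j - \sum_(k < n) Qhat_exit l k.
Proof. by []. Qed.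

(* The partial derivatives of Qhat in l0 and in each l i vanish. *)
Definition Qhat_critical (l0 : R) (l : 'I_n -> R) : Prop :=
  \sum_(j < n) \sum_(k < n) Qhat_flux l0 l k j = alpha /\
  forall i, \sum_(k < n) Qhat_flux l0 l k i
            = alpha * (\sum_(j < n) Qhat_flux l0 l i j + Qhat_exit l i).

Lemma Qhat_critical_derivative l0 l (d0 : R) (d : 'I_n -> R) :
  Qhat_critical l0 l ->
  \sum_(j < n) \sum_(k < n) Qhat_flux l0 l k j * (d0 + d j - alpha * d k)
  + \sum_(k < n) Qhat_exit l k * (- alpha * d k) = alpha * d0.
Proof.
set w := Qhat_flux l0 l; set v := Qhat_exit l; move=> [w_sum w_col].
have -> : \sum_(j < n) \sum_(k < n) w k j * (d0 + d j - alpha * d k) =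
    d0 * \sum_(j < n) \sum_(k < n) w k j + \sum_(j < n) d j * \sum_(k < n) w k j
    - alpha * \sum_(k < n) d k * \sum_(j < n) w k j.
  have -> : \sum_(k < n) d k * \sum_(j < n) w k j
          = \sum_(j < n) \sum_(k < n) w k j * d k.
    rewrite exchange_big; apply: eq_bigr => k _; rewrite mulr_sumr.
    by apply: eq_bigr => j _; rewrite mulrC.
  rewrite !mulr_sumr -big_split -sumrB /=; apply: eq_bigr => j _.
  rewrite !mulr_sumr -big_split -sumrB /=; apply: eq_bigr => k _; ring.
rewrite w_sum; under [\sum_(j < n) d j * _]eq_bigr do rewrite w_col.
have -> : \sum_(j < n) d j * (alpha * (\sum_(i < n) w j i + v j)) =
    alpha * \sum_(k < n) d k * \sum_(j < n) w k j
    - \sum_(k < n) v k * (- alpha * d k).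
  by rewrite mulr_sumr -sumrB; apply: eq_bigr => k _; ring.
ring.
Qed.

Hypotheses (C_ge0 : forall k j, 0 <= C k j) (c_ge0 : forall k, 0 <= c k).

Lemma Qhat_le_tangent l0 l m0 m :
  Qhat alpha C c m0 m <= alpha * m0
  - \sum_(j < n) \sum_(k < n) Qhat_flux l0 l k j
      * (1 + ((m0 - l0) + (m j - l j) - alpha * (m k - l k)))
  - \sum_(k < n) Qhat_exit l k * (1 + (- alpha * (m k - l k))).
Proof.
rewrite QhatE lerB // ?lerB //; apply: ler_sum => j _; last first.
  rewrite /Qhat_exit mulrAC.
  have -> : - alpha * (m j - l j) = (- 1 - alpha * m j) - (- 1 - alpha * l j).
    by ring.
  exact: expR_tangent_le.
apply: ler_sum => k _; rewrite /Qhat_flux mulrAC.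
have -> : m0 - l0 + (m j - l j) - alpha * (m k - l k) =
    (m0 - 1 + m j - alpha * m k) - (l0 - 1 + l j - alpha * l k) by ring.
exact: expR_tangent_le.
Qed.

Lemma Qhat_critical_max l0 l : Qhat_critical l0 l ->
  forall m0 m, Qhat alpha C c m0 m <= Qhat alpha C c l0 l.
Proof.
move=> crit m0 m; apply: (le_trans (Qhat_le_tangent l0 l m0 m)).
have deriv := Qhat_critical_derivative (m0 - l0) (fun i => m i - l i) crit.
have split_flux :
    \sum_(j < n) \sum_(k < n) Qhat_flux l0 l k j
      * (1 + ((m0 - l0) + (m j - l j) - alpha * (m k - l k)))
    = \sum_(j < n) \sum_(k < n) Qhat_flux l0 l k j
      + \sum_(j < n) \sum_(k < n) Qhat_flux l0 l k j
      * ((m0 - l0) + (m j - l j) - alpha * (m k - l k)).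
  rewrite -big_split; apply: eq_bigr => j _ /=.
  by rewrite -big_split; apply: eq_bigr => k _ /=; rewrite mulrDr mulr1.
have split_exit :
    \sum_(k < n) Qhat_exit l k * (1 + (- alpha * (m k - l k)))
    = \sum_(k < n) Qhat_exit l k
      + \sum_(k < n) Qhat_exit l k * (- alpha * (m k - l k)).
  by rewrite -big_split; apply: eq_bigr => k _ /=; rewrite mulrDr mulr1.
rewrite QhatE split_flux split_exit; lra.
Qed.

End QhatConcave.

Lemma powR_1Dr_powRN (R : realType) (x a : R) : 0 < x ->
  x `^ (1 + a) * x `^ (- a) = x.
Proof.
move=> x_gt0; have := @powRD R x (1 + a) (- a).
by rewrite addrK powRr1 ?ltW // oner_eq0 => /(_ isT) <-.
Qed.

Section FixedPoint.
Variables (R : realType) (n : nat) (alpha : R).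
Variables (C : 'I_n -> 'I_n -> R) (c : 'I_n -> R).
Variables (x : 'I_n -> R) (lam0 : R).
Hypothesis x_gt0 : forall i, 0 < x i.

Let lam i := ln (x i) - lam0.
Let E := expR (alpha * lam0 - 1).

Lemma Qhat_flux_at_log k j :
  Qhat_flux alpha C lam0 lam k j = E * x j * x k `^ (- alpha) * C k j.
Proof.
rewrite /Qhat_flux /lam /E /powR gt_eqF // -{2}(lnK (x_gt0 j : x j \is Num.pos)).
by rewrite -!expRD; congr (expR _ * _); ring.
Qed.

Lemma Qhat_exit_at_log k :
  Qhat_exit alpha c lam k = E * x k `^ (- alpha) * c k.
Proof.
by rewrite /Qhat_exit /lam /E /powR gt_eqF // -expRD; congr (expR _ * _); ring.
Qed.

Hypothesis fixed_point : forall i, x i `^ (1 + alpha) =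
  alpha * (\sum_(j < n) C i j * x j + c i) / (\sum_(k < n) C k i * x k `^ (- alpha)).
Hypothesis normalization :
  E * (\sum_(i < n) \sum_(j < n) C i j * x j * x i `^ (- alpha)) = alpha.

Lemma Qhat_critical_at_fixed_point : Qhat_critical alpha C c lam0 lam.
Proof.
split.
  rewrite -[RHS]normalization exchange_big mulr_sumr; apply: eq_bigr => k _.
  by rewrite mulr_sumr; apply: eq_bigr => j _; rewrite Qhat_flux_at_log; ring.
move=> i; pose S := \sum_(k < n) C k i * x k `^ (- alpha).
pose N := \sum_(j < n) C i j * x j + c i.
have fixed_point_i : x i `^ (1 + alpha) = alpha * N / S := fixed_point i.
have inflow : \sum_(k < n) Qhat_flux alpha C lam0 lam k i = E * x i * S.
  by rewrite mulr_sumr; apply: eq_bigr => k _; rewrite Qhat_flux_at_log; ring.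
have outflow : \sum_(j < n) Qhat_flux alpha C lam0 lam i j + Qhat_exit alpha c lam i
    = E * x i `^ (- alpha) * N.
  rewrite /N mulrDr mulr_sumr Qhat_exit_at_log; congr (_ + _).
  by apply: eq_bigr => j _; rewrite Qhat_flux_at_log; ring.
have S_neq0 : S != 0.
  apply: contraPneq fixed_point_i => ->.
  by rewrite invr0 mulr0; apply/eqP; rewrite gt_eqF // powR_gt0.
have balance : alpha * N = x i `^ (1 + alpha) * S by rewrite fixed_point_i divfK.
rewrite inflow outflow -[in LHS](powR_1Dr_powRN alpha (x_gt0 i)).
have -> : alpha * (E * x i `^ (- alpha) * N) = E * x i `^ (- alpha) * (alpha * N).
  by ring.
by rewrite balance; ring.
Qed.

End FixedPoint.

Theorem lemma7 (d : measure_display) (X : measurableType d) (R : realType)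
  (m : {measure set X -> \bar R}) (A : set X) (T : X -> X)
  (n : nat) (B : 'I_n -> set X) (alpha : R)
  (C : 'I_n -> 'I_n -> R) (c : 'I_n -> R)
  (x : 'I_n -> R) (lam0 : R) :
  nonsingular_open_system m A T ->
  m (A_infty A T) = 0%E ->
  0 < alpha < 1 ->
  (forall i, measurable (B i)) ->
  (forall i j, i != j -> B i `&` B j = set0) ->
  \bigcup_i B i = A ->
  (forall k j, m (Ahat m A T B alpha `&` B k `&` T @^-1` B j) = (C k j)%:E) ->
  (forall k, m (Ahat m A T B alpha `&` H_1 A T `&` B k) = (c k)%:E) ->
  (forall i, 0 < x i) ->
  (forall i, x i `^ (1 + alpha) =
     alpha * (\sum_(j < n) C i j * x j + c i)
       / (\sum_(k < n) C k i * x k `^ (- alpha))) ->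
  expR (alpha * lam0 - 1) *
    (\sum_(i < n) \sum_(j < n) C i j * x j * x i `^ (- alpha)) = alpha ->
  forall (l0 : R) (l : 'I_n -> R),
    Qhat alpha C c l0 l <= Qhat alpha C c lam0 (fun i => ln (x i) - lam0).
Proof.
move=> _ _ _ _ _ _ mC mc x_gt0 fixed_point normalization l0 l.
apply: Qhat_critical_max.
- by move=> k j; rewrite -lee_fin -mC measure_ge0.
- by move=> k; rewrite -lee_fin -mc measure_ge0.
- exact: Qhat_critical_at_fixed_point.
Qed.
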